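(* Suppose there exists a $\pi_p$-bounded element $\xi\in G$. Then $H^0_{\mathrm{ct}}(G,\pi_p)=L^p(G,V)^G=\{0\}$.
   Context: $G$ is a locally compact second countable group with left Haar measure; $(\pi_0,V)$ is a continuous representation of $G$ on a separable Banach space $V$; for $p>1$, $\pi_p$ is the representation on the Bochner space $L^p(G,V)$ given by $(\pi(g)f)(h)=\pi_0(g)(f(hg))$, and $L^p(G,V)^G$ its space of $G$-invariant vectors. An element $\xi$ is $\pi_p$-bounded if $\{\xi^n:n>0\}$ is not relatively compact and $\sup_{n>0}|||\pi(\xi^n)|||_{L^p(G,V)}<\infty$. *)

From HB Require Import structures.
From mathcomp Require Import all_boot all_order all_algebra.
From mathcomp Require Import all_classical all_reals all_analysis.
Set Implicit Arguments. Unset Strict Implicit. Unset Printing Implicit Defensive.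
Import Order.TTheory GRing.Theory Num.Theory.
Import numFieldNormedType.Exports.
Local Open Scope classical_set_scope.
Local Open Scope ring_scope.

Notation Borel G := (g_sigma_algebraType (@open G)).

Definition is_group (G : Type) (mul : G -> G -> G) (inv : G -> G) (e : G) :=
  [/\ forall x y z, mul x (mul y z) = mul (mul x y) z,
      forall x, mul e x = x,
      forall x, mul x e = x,
      forall x, mul (inv x) x = e &
      forall x, mul x (inv x) = e].

Definition lcsc_group (G : ptopologicalType) (mul : G -> G -> G) (inv : G -> G)
    (e : G) :=
  [/\ is_group mul inv e,
      continuous (fun xy : G * G => mul xy.1 xy.2),
      continuous inv,
      hausdorff_space G &
      locally_compact [set: G] /\ second_countable (T := G)].

Definition left_haar (R : realType) (G : ptopologicalType)
    (mul : G -> G -> G) (mu : {measure set (Borel G) -> \bar R}) :=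
  [/\ forall (g : G) (A : set G), (@open G).-sigma.-measurable A ->
        mu (mul g @` A) = mu A,
      forall K : set G, compact K -> (mu K < +oo)%E &
      forall U : set G, open U -> U !=set0 -> (0 < mu U)%E].

Definition separable (T : topologicalType) :=
  exists2 S : set T, countable S & dense S.

Definition cont_rep (R : realType) (G : ptopologicalType)
    (mul : G -> G -> G) (e : G) (V : normedModType R) (pi0 : G -> V -> V) :=
  [/\ forall g (a : R) (u v : V), pi0 g (a *: u + v) = a *: pi0 g u + pi0 g v,
      forall g, continuous (pi0 g),
      forall v, pi0 e v = v,
      forall g h v, pi0 (mul g h) v = pi0 g (pi0 h v) &
      forall v, continuous (fun g => pi0 g v)].

(* Borel measurability of a V-valued function (for separable V this is
   the same as Bochner/strong measurability, by Pettis' theorem). *)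
Definition borel_measurable (R : realType) (G : ptopologicalType)
    (V : normedModType R) (f : G -> V) :=
  forall U : set V, open U -> (@open G).-sigma.-measurable (f @^-1` U).

Definition in_Lp (R : realType) (G : ptopologicalType)
    (mu : {measure set (Borel G) -> \bar R}) (p : R) (V : normedModType R)
    (f : G -> V) :=
  borel_measurable f /\
  (\int[mu]_x ((`|f x| `^ p)%:E) < +oo)%E.

Definition Lp_norm (R : realType) (G : ptopologicalType)
    (mu : {measure set (Borel G) -> \bar R}) (p : R) (V : normedModType R)
    (f : G -> V) : R :=
  (fine (\int[mu]_x ((`|f x| `^ p)%:E))) `^ p^-1.

Definition pi_p (G : Type) (mul : G -> G -> G) (V : Type) (pi0 : G -> V -> V)
    (g : G) (f : G -> V) : G -> V :=
  fun h => pi0 g (f (mul h g)).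

Definition gpow (G : Type) (mul : G -> G -> G) (e : G) (xi : G) (n : nat) : G :=
  iter n (mul xi) e.

Definition pi_p_bounded (R : realType) (G : ptopologicalType)
    (mul : G -> G -> G) (e : G) (mu : {measure set (Borel G) -> \bar R})
    (p : R) (V : normedModType R) (pi0 : G -> V -> V) (xi : G) :=
  ~ compact (closure [set gpow mul e xi n | n in [set n : nat | (0 < n)%N]]) /\
  exists C : R, forall n : nat, (0 < n)%N ->
    forall f : G -> V, in_Lp mu p f ->
      Lp_norm mu p (pi_p mul pi0 (gpow mul e xi n) f) <= C * Lp_norm mu p f.

(* L^p(G,V)^G = {0}: every (class of) L^p function that is pi_p(g)-invariant
   (as an element of L^p, i.e. mu-a.e.) for all g is 0 in L^p (mu-a.e.). *)
Definition Lp_invariants_trivial (R : realType) (G : ptopologicalType)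
    (mul : G -> G -> G) (mu : {measure set (Borel G) -> \bar R})
    (p : R) (V : normedModType R) (pi0 : G -> V -> V) :=
  forall f : G -> V, in_Lp mu p f ->
    (forall g : G, {ae mu, forall h : Borel G, pi_p mul pi0 g f h = f h}) ->
    {ae mu, forall h : Borel G, f h = 0}.

(* Let f be a pi_p(G)-invariant element of L^p(G,V) and write
   J(A) = \int_A |f|^p for its "local mass" on a Borel set A.
   - If f is not a.e. zero, sigma-compactness of G yields a compact K with
     J(K) > 0.
   - Invariance gives pi_p(g)(f 1_{Kg}) = f 1_K a.e., so the uniform operator
     bound C for the powers xi^n gives J(K)^(1/p) <= C J(K xi^n)^(1/p): every
     right translate K xi^n carries mass at least some fixed c > 0.
   - Since {xi^n} is not relatively compact while K^-1 M is compact, every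
     compact M misses some translate K xi^n.
   - Adding disjoint translates one at a time produces compact sets of
     arbitrarily large mass, contradicting J(G) < +oo. *)
From HB Require Import structures.
From mathcomp Require Import all_boot all_order all_algebra.
From mathcomp Require Import all_classical all_reals all_analysis.
From mathcomp Require Import measurable_realfun.
Import Order.TTheory GRing.Theory Num.Theory.
Import numFieldNormedType.Exports.
Local Open Scope classical_set_scope.
Local Open Scope ring_scope.

Section BorelSets.
Context {G : ptopologicalType}.

Lemma open_measurable {A : set G} : open A -> measurable (A : set (Borel G)).
Proof. by move=> oA; apply: sub_sigma_algebra. Qed.

Lemma closed_measurable {A : set G} : closed A -> measurable (A : set (Borel G)).
Proof.
move=> cA; rewrite -(setCK A); apply: measurableC; apply: open_measurable.
exact: closed_openC.
Qed.

Lemma compact_measurable {A : set G} :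
  hausdorff_space G -> compact A -> measurable (A : set (Borel G)).
Proof. by move=> hG cA; apply: closed_measurable; exact: compact_closed. Qed.

Lemma continuous_preimage_measurable {phi : G -> G} {A : set (Borel G)} :
  continuous phi -> measurable A -> measurable (phi @^-1` A : set (Borel G)).
Proof.
move=> cphi mA.
have mphi : measurable_fun (setT : set (Borel G)) (phi : Borel G -> Borel G).
  apply: (@measurability _ _ (Borel G) (Borel G) setT phi (@open G) erefl).
  move=> _ [B oB <-]; rewrite setTI; apply: open_measurable.
  by move/continuousP : cphi; apply.
by rewrite -[_ @^-1` _]setTI; apply: mphi.
Qed.

End BorelSets.

(* An lcsc space is sigma-compact: closures of the relatively compact
   members of a countable base form a countable compact cover. *)
Lemma sigma_compact {G : ptopologicalType} :
  locally_compact [set: G] -> second_countable (T := G) ->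
  exists F : nat -> set G, (forall n, compact (F n)) /\ \bigcup_n F n = setT.
Proof.
move=> lc [B cB [_ Bb]].
have [phi phiI] := countable_injP _ cB.
pose P n V := B V /\ compact (closure V) /\ phi V = n.
pose F n := if pselect (exists V, P n V) is left h
  then closure (projT1 (cid h)) else set0.
exists F; split.
  move=> n; rewrite /F; case: pselect => [h|_]; last exact: compact0.
  by have [_ []] := projT2 (cid h).
apply/seteqP; split => // x _.
have [U [nU [cU clU]]] : exists U, nbhs x U /\ compact U /\ closed U.
  by have [U] := lc x I; rewrite withinET => nU cU; exists U.
have [V [BV Vx] VU] := Bb x U nU.
have cV : compact (closure V).
  apply: (subclosed_compact _ cU); first exact: closed_closure.
  by move: clU; rewrite closure_id => ->; exact: closureS.
exists (phi V) => //; rewrite /F; case: pselect => [h|]; last first.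
  by move=> /(_ (ex_intro _ V (conj BV (conj cV erefl)))).
case: (cid h) => W [BW [_ eW]] /=.
have -> : W = V by apply: phiI; rewrite ?inE.
exact: subset_closure.
Qed.

Definition rtranslate (G : Type) (mul : G -> G -> G) (K : set G) (g : G) : set G :=
  [set mul k g | k in K].
Arguments rtranslate {G}.

Section TopologicalGroup.
Context {G : ptopologicalType} {mul : G -> G -> G} {inv : G -> G} {e : G}.
Hypothesis grp : is_group mul inv e.
Hypothesis cmul : continuous (fun xy : G * G => mul xy.1 xy.2).
Hypothesis cinv : continuous inv.
Hypothesis hG : hausdorff_space G.

Lemma right_mul_continuous (g : G) : continuous (fun h => mul h g).
Proof.
have cpair : continuous (fun h : G => (h, g)).
  by move=> h; apply: cvg_pair; [exact: cvg_id|exact: cvg_cst].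
by move=> h; apply: (continuous_comp (cpair h) (cmul (h, g))).
Qed.

Lemma left_div_continuous : continuous (fun xy : G * G => mul (inv xy.1) xy.2).
Proof.
have cpair : continuous (fun xy : G * G => (inv xy.1, xy.2)).
  move=> xy; apply: cvg_pair; last exact: cvg_snd.
  exact: (continuous_comp (cvg_fst (FG := nbhs_filter _)) (cinv xy.1)).
by move=> xy; apply: (continuous_comp (cpair xy) (cmul _)).
Qed.

Lemma rtranslate_compact {K : set G} {g : G} :
  compact K -> compact (rtranslate mul K g).
Proof.
by apply: continuous_compact; apply/continuous_subspaceT/right_mul_continuous.
Qed.

(* If S is not relatively compact, then any compact M misses a translate
   K s with s in S: otherwise S lies in the compact set K^-1 M. *)
Lemma escaping_translate {K M S : set G} :
  compact K -> compact M -> ~ compact (closure S) ->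
  exists2 s, S s & M `&` rtranslate mul K s = set0.
Proof.
move=> cK cM ncS; have [mA m1 _ mV1 _] := grp.
pose Q := [set mul (inv xy.1) xy.2 | xy in K `*` M].
have cQ : compact Q.
  apply: continuous_compact; last exact: compact_setX.
  exact/continuous_subspaceT/left_div_continuous.
apply: contrapT => hS; apply: ncS.
apply: (subclosed_compact _ cQ); first exact: closed_closure.
have clQ : closed Q := compact_closed hG cQ.
move: clQ; rewrite closure_id => ->; apply: closureS => s Ss.
apply: contrapT => Qs; apply: hS; exists s => //.
apply/seteqP; split => // x [Mx [k Kk kx]]; apply: Qs; exists (k, x) => //=.
by rewrite -kx mA mV1 m1.
Qed.

End TopologicalGroup.

Lemma norm_powR_measurable {R : realType} {G : ptopologicalType}
    {V : normedModType R} {f : G -> V} (p : R) :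
  borel_measurable f ->
  measurable_fun (setT : set (Borel G)) (fun x : Borel G => `|f x| `^ p).
Proof.
move=> mf.
have mn : measurable_fun (setT : set (Borel G)) (fun x : Borel G => `|f x|).
  apply: (measurability (@RGenOpens.G R)); first exact: RGenOpens.measurableE.
  move=> _ [_ [a [b ->]] <-]; rewrite setTI.
  apply: (mf (Num.norm @^-1` `]a, b[%classic)).
  by apply: (continuousP _).1; [exact: norm_continuous|exact: interval_open].
exact: (measurableT_comp (measurable_powR _) mn).
Qed.

Lemma pi_p_measurable (R : realType) (G : ptopologicalType) (mul : G -> G -> G)
    (V : normedModType R) (pi0 : G -> V -> V) (g : G) (f : G -> V) :
  continuous (fun xy : G * G => mul xy.1 xy.2) -> continuous (pi0 g) ->
  borel_measurable f -> borel_measurable (pi_p mul pi0 g f).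
Proof.
move=> cmul cpi mf U oU.
have oU' : open (pi0 g @^-1` U) by move/continuousP : cpi; apply.
have -> : pi_p mul pi0 g f @^-1` U =
  (fun h => mul h g) @^-1` (f @^-1` (pi0 g @^-1` U)) by [].
exact: (continuous_preimage_measurable (right_mul_continuous cmul g) (mf _ oU')).
Qed.

Definition restrict (G : Type) (V : zmodType) (A : set G) (f : G -> V) : G -> V :=
  fun h => if h \in A then f h else 0.
Arguments restrict {G V}.

Lemma restrict_measurable (R : realType) (G : ptopologicalType)
    (V : normedModType R) (A : set G) (f : G -> V) :
  measurable (A : set (Borel G)) -> borel_measurable f ->
  borel_measurable (restrict A f).
Proof.
move=> mA mf U oU.
have -> : restrict A f @^-1` U = (A `&` f @^-1` U) `|` (~` A `&` [set _ | U 0]).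
  apply/seteqP; split => h; rewrite /restrict /=.
    case: ifPn => [/set_mem Ah|/negP hA] Uh; [by left|right].
    by split => // Ah; apply/hA/mem_set.
  by case=> -[Ah Uh]; [rewrite mem_set|rewrite ifF //; apply/negP => /set_mem].
apply: measurableU; first exact: measurableI (mf U oU).
apply: measurableI; first exact: measurableC.
have [U0|nU0] := pselect (U 0).
  by rewrite (_ : [set _ | U 0] = setT) //; apply/seteqP; split.
by rewrite (_ : [set _ | U 0] = set0) //; apply/seteqP; split.
Qed.

Lemma pi_p_restrict {G : Type} {mul : G -> G -> G} {inv : G -> G} {e : G}
    {V : zmodType} { pi0 : G -> V -> V } {K : set G} {g : G} {f : G -> V} :
  is_group mul inv e -> pi0 g 0 = 0 ->
  pi_p mul pi0 g (restrict (rtranslate mul K g) f) = restrict K (pi_p mul pi0 g f).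
Proof.
move=> [mA _ m2 _ mV2] pg0; apply: funext => h; rewrite /pi_p /restrict.
have -> : (mul h g \in rtranslate mul K g) = (h \in K).
  apply/idP/idP => /set_mem; last by move=> Kh; apply: mem_set; exists h.
  move=> [k Kk kh]; apply: mem_set.
  have : mul (mul k g) (inv g) = mul (mul h g) (inv g) by rewrite kh.
  by rewrite -!mA mV2 !m2 => <-.
by case: ifP.
Qed.

Lemma linear_map0 {R : realType} {V : normedModType R} {T : V -> V} :
  (forall (a : R) u v, T (a *: u + v) = a *: T u + T v) -> T 0 = 0.
Proof.
move=> h; have := h 1 0 0; rewrite scale1r addr0 scale1r.
by rewrite -{1}(addr0 (T 0)) => /addrI <-.
Qed.

Definition local_mass (R : realType) (G : ptopologicalType)
    (mu : {measure set (Borel G) -> \bar R}) (p : R) (V : normedModType R)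
    (f : G -> V) (A : set G) : \bar R :=
  (\int[mu]_(x in (A : set (Borel G))) ((`|f x| `^ p)%:E))%E.
Arguments local_mass {R G} mu p {V}.

Section LocalMass.
Context {R : realType} {G : ptopologicalType}.
Context {mu : {measure set (Borel G) -> \bar R}} {p : R} {V : normedModType R}.
Hypothesis p0 : 0 < p.

Local Notation J := (local_mass mu p).

Lemma local_mass_ge0 (f : G -> V) (A : set G) : (0 <= J f A)%E.
Proof. by apply: integral_ge0 => x _; rewrite lee_fin powR_ge0. Qed.

Lemma integral_restrict (f : G -> V) (A : set G) :
  (\int[mu]_x ((`|restrict A f x| `^ p)%:E) = J f A)%E.
Proof.
rewrite /local_mass [RHS]integral_mkcond; apply: eq_integral => x _.
rewrite /restrict patchE.
by case: ifPn => //= _; rewrite normr0 powR0 ?gt_eqF.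
Qed.

Lemma Lp_norm_restrict (f : G -> V) (A : set G) :
  Lp_norm mu p (restrict A f) = fine (J f A) `^ p^-1.
Proof. by rewrite /Lp_norm integral_restrict. Qed.

Section InLp.
Context {f : G -> V}.
Hypothesis f_Lp : in_Lp mu p f.

Lemma local_mass_measurable :
  measurable_fun (setT : set (Borel G)) (fun x : Borel G => (`|f x| `^ p)%:E).
Proof. by apply/measurable_EFinP; apply: norm_powR_measurable; case: f_Lp. Qed.

Lemma local_mass_le_total {A : set G} :
  measurable (A : set (Borel G)) -> (J f A <= J f setT)%E.
Proof.
move=> mA; apply: ge0_subset_integral => //; first exact: local_mass_measurable.
Qed.

Lemma local_mass_fin {A : set G} :
  measurable (A : set (Borel G)) -> J f A = (fine (J f A))%:E.
Proof.
move=> mA; rewrite fineK // ge0_fin_numE ?local_mass_ge0 //.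
by apply: (le_lt_trans (local_mass_le_total mA)); case: f_Lp.
Qed.

Lemma restrict_in_Lp {A : set G} :
  measurable (A : set (Borel G)) -> in_Lp mu p (restrict A f).
Proof.
move=> mA; split; first by apply: restrict_measurable => //; case: f_Lp.
rewrite integral_restrict; apply: le_lt_trans (local_mass_le_total mA) _.
by case: f_Lp.
Qed.

Lemma local_mass_setU (A B : set G) :
  measurable (A : set (Borel G)) -> measurable (B : set (Borel G)) ->
  A `&` B = set0 -> J f (A `|` B) = (J f A + J f B)%E.
Proof.
move=> mA mB AB0; apply: ge0_integral_setU => //.
- exact: measurable_funS local_mass_measurable.
- by rewrite disj_set2E AB0.
Qed.

Lemma ae_zero_of_null_cover (F : nat -> set G) :
  (forall n, measurable (F n : set (Borel G))) -> \bigcup_n F n = setT ->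
  (forall n, J f (F n) = 0%E) -> {ae mu, forall h : Borel G, f h = 0}.
Proof.
move=> mF UF JF0.
have nullF n : ae_eq mu (F n : set (Borel G))
    (fun x => (`|f x| `^ p)%:E) (cst 0%E).
  apply/(ae_eq_integral_abs mu (mF n)).
    exact: measurable_funS local_mass_measurable.
  rewrite -[RHS](JF0 n); apply: eq_integral => x _.
  by rewrite gee0_abs // lee_fin powR_ge0.
apply: negligibleS (negligible_bigcup nullF) => x /= fx0.
have : [set: G] x by [].
rewrite -UF => -[n _ Fnx]; exists n => //= /(_ Fnx) /eqP.
rewrite eqe => /eqP /powR_eq0_eq0 /eqP; rewrite normr_eq0 => /eqP.
exact: fx0.
Qed.

Lemma positive_mass_compact :
  hausdorff_space G -> locally_compact [set: G] -> second_countable (T := G) ->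
  ~ {ae mu, forall h : Borel G, f h = 0} ->
  exists2 K : set G, compact K & (0 < J f K)%E.
Proof.
move=> hG lc sc fnz; have [F [cF UF]] := sigma_compact lc sc.
apply: contrapT => noK; apply: fnz.
apply: (@ae_zero_of_null_cover F _ UF) => n.
  exact: compact_measurable.
apply/eqP; rewrite eq_le local_mass_ge0 andbT leNgt; apply/negP => Fpos.
by apply: noK; exists (F n).
Qed.

End InLp.
End LocalMass.

(* The core estimate: if f is a.e. pi_p(g)-invariant and pi_p(g) has
   operator norm at most C, applying pi_p(g) to f 1_{Kg} (which gives
   f 1_K a.e.) shows J(K)^(1/p) <= C J(Kg)^(1/p). *)
Lemma translate_mass_bound (R : realType) (G : ptopologicalType)
    (mul : G -> G -> G) (inv : G -> G) (e : G)
    (mu : {measure set (Borel G) -> \bar R}) (V : normedModType R)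
    (pi0 : G -> V -> V) (p C : R) (f : G -> V) (g : G) (K : set G) :
  is_group mul inv e -> continuous (fun xy : G * G => mul xy.1 xy.2) ->
  (forall (a : R) (u v : V), pi0 g (a *: u + v) = a *: pi0 g u + pi0 g v) ->
  continuous (pi0 g) -> 0 < p -> in_Lp mu p f ->
  {ae mu, forall h : Borel G, pi_p mul pi0 g f h = f h} ->
  (forall h : G -> V, in_Lp mu p h ->
    Lp_norm mu p (pi_p mul pi0 g h) <= C * Lp_norm mu p h) ->
  measurable (K : set (Borel G)) ->
  measurable (rtranslate mul K g : set (Borel G)) ->
  fine (local_mass mu p f K) `^ p^-1 <=
  C * fine (local_mass mu p f (rtranslate mul K g)) `^ p^-1.
Proof.
move=> grp cmul lin cpi p0 f_Lp finv bound mK mKg.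
have := bound _ (restrict_in_Lp p0 f_Lp mKg).
rewrite (pi_p_restrict grp (linear_map0 lin)) !(Lp_norm_restrict p0).
suff -> : local_mass mu p (pi_p mul pi0 g f) K = local_mass mu p f K by [].
have mpif : borel_measurable (pi_p mul pi0 g f).
  by apply: pi_p_measurable => //; case: f_Lp.
apply: ae_eq_integral => //.
- apply/measurable_EFinP.
  exact: measurable_funS measurableT (@subsetT _ _)
    (norm_powR_measurable p mpif).
- exact: measurable_funS measurableT (@subsetT _ _) (local_mass_measurable f_Lp).
- by apply: filterS finv => x /= fx _; rewrite fx.
Qed.

Lemma powR_lower_bound (R : realType) (p a b C : R) :
  0 < p -> 0 < a -> 0 <= b -> a `^ p^-1 <= C * b `^ p^-1 ->
  0 < (a `^ p^-1 / C) `^ p <= b.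
Proof.
move=> p0 a0 b0 hab.
have ap0 : 0 < a `^ p^-1 by rewrite powR_gt0.
have C0 : 0 < C.
  rewrite ltNge; apply/negP => C0.
  have : C * b `^ p^-1 <= 0 by rewrite mulr_le0_ge0 ?powR_ge0.
  by move/(le_trans hab); rewrite leNgt ap0.
rewrite powR_gt0 ?divr_gt0 //=.
have hab' : a `^ p^-1 / C <= b `^ p^-1 by rewrite ler_pdivrMr // mulrC.
have n1 : a `^ p^-1 / C \in Num.nneg by rewrite nnegrE divr_ge0 ?powR_ge0 ?ltW.
have n2 : b `^ p^-1 \in Num.nneg by rewrite nnegrE powR_ge0.
have := ge0_ler_powR (ltW p0) n1 n2 hab'.
by rewrite -powRrM mulVf ?gt_eqF // powRr1.
Qed.

(* Abstract escaping-mass argument: a finitely bounded additive set function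
   cannot admit, next to every admissible set M, a disjoint admissible set
   of mass at least c > 0 (otherwise the mass of finite unions grows like
   m c). *)
Lemma no_escaping_mass (R : realType) (T : Type) (P : set (set T))
    (nu : set T -> \bar R) (b c : R) :
  0 < c -> P set0 -> nu set0 = 0%E ->
  (forall A B, P A -> P B -> P (A `|` B)) ->
  (forall A B, P A -> P B -> A `&` B = set0 -> nu (A `|` B) = (nu A + nu B)%E) ->
  (forall A, P A -> (nu A <= b%:E)%E) ->
  ~ (forall M, P M -> exists2 B, P B & M `&` B = set0 /\ (c%:E <= nu B)%E).
Proof.
move=> c0 P0 nu0 PU nuU nub escape.
have grow m : exists2 M, P M & ((m%:R * c)%:E <= nu M)%E.
  elim: m => [|m [M PM mM]]; first by exists set0; rewrite // mul0r nu0.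
  have [B PB [MB cB]] := escape M PM.
  exists (M `|` B); first exact: PU.
  by rewrite nuU // -nat1r mulrDl mul1r EFinD addeC leeD.
have b0 : 0 <= b by have := nub _ P0; rewrite nu0 lee_fin.
have [M PM] := grow (Num.bound (b / c)).
move=> /le_trans /(_ (nub M PM)); rewrite lee_fin -ler_pdivlMr //.
by rewrite leNgt (archi_boundP (divr_ge0 b0 (ltW c0))).
Qed.

Theorem corollary2 (R : realType) (G : ptopologicalType)
    (mul : G -> G -> G) (inv : G -> G) (e : G)
    (mu : {measure set (Borel G) -> \bar R})
    (V : completeNormedModType R) (pi0 : G -> V -> V) (p : R) :
  lcsc_group mul inv e ->
  left_haar mul mu ->
  separable V ->
  cont_rep mul e pi0 ->
  1 < p ->
  (exists xi : G, pi_p_bounded mul e mu p pi0 xi) ->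
  Lp_invariants_trivial mul mu p pi0.
Proof.
move=> [grp cmul cinv hG [lc sc]] _ _ [lin cpi _ _ _] p1 [xi [ncpt [C bound]]].
move=> f f_Lp finv; have p0 : 0 < p by apply: lt_trans p1.
apply: contrapT => fnz.
have [K cK JK] := positive_mass_compact f_Lp hG lc sc fnz.
have mK := compact_measurable hG cK.
have cKs s : compact (rtranslate mul K s) := rtranslate_compact cmul cK.
have mKs s : measurable (rtranslate mul K s : set (Borel G)) :=
  compact_measurable hG (cKs s).
pose J := local_mass mu p f.
pose c := (fine (J K) `^ p^-1 / C) `^ p.
have mass_translate n : (0 < n)%N ->
    0 < c <= fine (J (rtranslate mul K (gpow mul e xi n))).
  move=> n0; apply: powR_lower_bound => //.
  - by rewrite -lte_fin -(local_mass_fin f_Lp mK).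
  - exact/fine_ge0/local_mass_ge0.
  - exact: translate_mass_bound grp cmul (lin _) (cpi _) p0 f_Lp (finv _)
      (bound n n0) mK (mKs _).
have c0 : 0 < c by have /andP[] := mass_translate 1%N isT.
(* compact sets then carry unbounded mass, contradicting J(G) < +oo *)
apply: (@no_escaping_mass R G compact J (fine (J setT)) c c0).
- exact: compact0.
- exact: integral_set0.
- by move=> A B; exact: compactU.
- move=> A B cA cB; apply: (local_mass_setU f_Lp);
    exact: compact_measurable hG _.
- move=> A cA; rewrite -(local_mass_fin f_Lp measurableT).
  exact: (local_mass_le_total f_Lp (compact_measurable hG cA)).
move=> M cM.
have [_ [n n0 <-] MKn] := escaping_translate grp cmul cinv hG cK cM ncpt.
exists (rtranslate mul K (gpow mul e xi n)) => //; split=> //.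
rewrite /J (local_mass_fin f_Lp (mKs _)) lee_fin.
by case/andP: (mass_translate n n0).
Qed.
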